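(* Fix $q\in(0,1)$. Consider a sequence of problems indexed by $n\to\infty$ with dimension $p=p_n$ (possibly diverging with $n$). For each $n$, let $\widehat{W}_1,\ldots,\widehat{W}_p$ be real-valued random variables (the approximate knockoff statistics) and let $\mathcal{H}_0\subset\{1,\ldots,p\}$ be the (deterministic) set of null features. Define the threshold $$T_q \equiv \min\Big\{ t\in\{|\widehat W_1|,\ldots,|\widehat W_p|\} : \frac{\#\{j:\widehat W_j\le -t\}}{\#\{j:\widehat W_j\ge t\}\vee 1}\le q\Big\},$$ the selected set $\widehat{\mathcal S}\equiv\{j\in[p]:\widehat W_j\ge T_q\}$, and $$\mathrm{FDR}\equiv \mathbb E\Big[\frac{\#\{j: j\in\widehat{\mathcal S}\cap\mathcal H_0\}}{\#\{j:j\in\widehat{\mathcal S}\}\vee 1}\Big].$$ Assume that for some $\alpha_n>0$ the following hold: (1) (asymptotic approximate symmetry) $\displaystyle\sup_{t\in(0,\alpha_n)}\Big|\frac{\sum_{j\in\mathcal H_0}\mathbb P(\widehat W_j\ge t)}{\sum_{j\in\mathcal H_0}\mathbb P(\widehat W_j\le -t)}-1\Big| = o(1)$; (2) (approximation for indicator functions) $$\sup_{t\in(0,\alpha_n)}\Big\{\Big|\frac{\sum_{j\in\mathcal H_0}\mathbf 1\{\widehat W_j\ge t\}}{\sum_{j\in\mathcal H_0}\mathbb P(\widehat W_j\ge t)}-1\Big|\vee\Big|\frac{\sum_{j\in\mathcal H_0}\mathbf 1\{\widehat W_j\le -t\}}{\sum_{j\in\mathcal H_0}\mathbb P(\widehat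 W_j\le -t)}-1\Big|\Big\}=o_{\mathbb P}(1);$$ (3) (localization of $T_q$) $\mathbb P(T_q>\alpha_n)=o(1)$. Then $\limsup_{n\to\infty}\mathrm{FDR}\le q$.
   Context: All asymptotic statements are as $n\to\infty$ with $p$ allowed to diverge with $n$; $a_n=o(b_n)$ means $a_n/b_n\to0$ and $a_n=o_{\mathbb P}(b_n)$ means $a_n/b_n\to0$ in probability. $a\vee b=\max\{a,b\}$. *)

From HB Require Import structures.
From mathcomp Require Import all_boot all_order all_algebra.
From mathcomp Require Import all_classical all_reals all_analysis.
Set Implicit Arguments. Unset Strict Implicit. Unset Printing Implicit Defensive.
Import Order.TTheory GRing.Theory Num.Theory.
Local Open Scope ring_scope.

Definition count_neg {R : realType} {m : nat} (w : 'I_m -> R) (t : R) : nat :=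
  #|[set j | w j <= - t]|.
Definition count_pos {R : realType} {m : nat} (w : 'I_m -> R) (t : R) : nat :=
  #|[set j | t <= w j]|.

Definition ratio_ok {R : realType} {m : nat} (q : R) (w : 'I_m -> R) (t : R) : bool :=
  (count_neg w t)%:R / (maxn (count_pos w t) 1)%:R <= q.

(* T_q = min { t in {|W_1|,...,|W_p|} : ratio condition }, with min of the
   empty set = +oo (so that nothing is selected). *)
Definition kthreshold {R : realType} {m : nat} (q : R) (w : 'I_m -> R) : \bar R :=
  \big[Order.min/+oo%E]_(j | ratio_ok q w `|w j|) (`|w j|)%:E.

Definition kselected {R : realType} {m : nat} (q : R) (w : 'I_m -> R) : {set 'I_m} :=
  [set j | (kthreshold q w <= (w j)%:E)%E].

Definition FDP {R : realType} {m : nat} (q : R) (H0 : {set 'I_m}) (w : 'I_m -> R) : R :=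
  #|kselected q w :&: H0|%:R / (maxn #|kselected q w| 1)%:R.

Definition prob {d : measure_display} {T : measurableType d} {R : realType}
  (P : probability T R) (A : set T) : R := fine (P A).

(* Put t0 = T_q <= alpha_n and pick t in (0, alpha_n) such that every
   statistic <= -t is already <= -t0 and every statistic in [t0, t) is <= -t0
   (take t just below t0 if t0 > 0, just above 0 if t0 = 0).  Then
     #(selected nulls) + #{j in H0 : W_j <= -t} <= #{j in H0 : W_j >= t} + #{j : W_j <= -t0},
   while (1) and (2) at t give #{j in H0 : W_j >= t} <= (1 + 8 eps) #{j in H0 : W_j <= -t}.
   Hence FDP <= (1 + 8 eps) #{j : W_j <= -t0} / (#S v 1) <= (1 + 8 eps) q by the
   definition of T_q.  This holds off an event of probability at most 2 delta,
   on which FDP <= 1 anyway. *)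

From HB Require Import structures.
From mathcomp Require Import all_boot all_order all_algebra.
From mathcomp Require Import all_classical all_reals all_analysis.
From mathcomp Require Import lra measurable_realfun.
Import Order.TTheory GRing.Theory Num.Theory.
Local Open Scope ring_scope.

Section Deterministic.
Variables (R : realType) (m : nat) (q : R).
Implicit Types (w : 'I_m -> R).

Lemma ratio_near1_bounds {a b e : R} : 0 <= b -> e < 1 ->
  `|a / b - 1| <= e -> [/\ 0 < b, a <= (1 + e) * b & (1 - e) * b <= a].
Proof.
move=> b_ge0 e_lt1 near1.
have b_gt0 : 0 < b.
  rewrite lt_neqAle b_ge0 andbT; apply: contraTneq near1 => <-.
  by rewrite invr0 mulr0 sub0r normrN normr1 -ltNge.
have -> : a = (a / b) * b by rewrite divfK ?gt_eqF.
move: near1; rewrite ler_norml; move: (a / b) => r /andP[? ?].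
by split => //; nra.
Qed.

Lemma le_of_ratios_near1 {a b x y e : R} :
  0 <= x -> 0 <= y -> e <= 1/2 ->
  `|a / x - 1| <= e -> `|b / y - 1| <= e -> `|x / y - 1| <= e ->
  a <= (1 + 8 * e) * b.
Proof.
move=> x_ge0 y_ge0 e_le a_x b_y x_y.
have e_lt1 : e < 1 by lra.
have [x_gt0 a_le _] := ratio_near1_bounds x_ge0 e_lt1 a_x.
have [y_gt0 _ b_ge] := ratio_near1_bounds y_ge0 e_lt1 b_y.
have [_ x_le _] := ratio_near1_bounds y_ge0 e_lt1 x_y.
have e_ge0 : 0 <= e by apply: le_trans a_x.
have x_le' : (1 + e) * x <= (1 + e) * ((1 + e) * y) by apply: ler_wpM2l => //; lra.
have b_ge' : (1 + 8 * e) * ((1 - e) * y) <= (1 + 8 * e) * b.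
  by apply: ler_wpM2l => //; lra.
have : 0 <= e * (5 - 9 * e) * y by rewrite !mulr_ge0 //; lra.
lra.
Qed.

Lemma exists_gap_above w a b : a < b ->
  exists t, [/\ a < t, t < b & forall j, w j <= a \/ t < w j].
Proof.
move=> ab.
pose M := Order.min b (\big[Order.min/b]_(j | a < w j) w j).
have aM : a < M.
  rewrite lt_min ab /=.
  by elim/big_ind: _ => // y z; rewrite lt_min => -> ->.
have Mw j : a < w j -> M <= w j.
  by move=> awj; rewrite /M (bigD1 j) //= !ge_min lexx !orbT.
have Mb : M <= b by rewrite ge_min lexx.
exists ((a + M) / 2); split; [lra|lra|] => j.
have [|awj] := leP (w j) a; [by left|right].
have := Mw j awj; lra.
Qed.

Lemma exists_interior_threshold w t0 alpha : 0 <= t0 <= alpha -> 0 < alpha ->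
  exists t, [/\ 0 < t < alpha,
    forall j, t0 <= w j < t -> w j <= - t0 &
    forall j, w j <= - t -> w j <= - t0].
Proof.
move=> /andP[t0_ge0 t0_le] alpha_gt0.
have [->|t0_gt0] := eqVneq t0 0.
  have [t [t_gt0 t_lt gapw]] := exists_gap_above w 0 alpha alpha_gt0.
  exists t; split=> [|j /andP[wj_ge0 wj_lt]|j wj_le]; rewrite ?oppr0.
  - by rewrite t_gt0.
  - by case: (gapw j) => // /lt_trans /(_ wj_lt); rewrite ltxx.
  - lra.
have {t0_gt0}t0_gt0 : 0 < t0 by rewrite lt_neqAle eq_sym t0_gt0.
have [t [t_gt t_lt0 gapw]] := exists_gap_above w (- t0) 0 ltac:(lra).
exists (- t); split=> [|j|j wj_le]; first lra.
  by move=> /andP[]; lra.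
by case: (gapw j) => //; lra.
Qed.

Lemma kthresholdP w : kthreshold q w = +oo%E \/
  exists2 k, ratio_ok q w `|w k| & kthreshold q w = `|w k|%:E.
Proof.
rewrite /kthreshold; elim/big_ind: _ => [|x y ? ?|k ok]; first by left.
- by rewrite minEle; case: ifP.
- by right; exists k.
Qed.

Lemma kthreshold_le w k : ratio_ok q w `|w k| -> (kthreshold q w <= `|w k|%:E)%E.
Proof. by move=> ok; rewrite /kthreshold (bigD1 k) //= ge_min lexx. Qed.

Lemma kthreshold_gtE w (a : R) : (a%:E < kthreshold q w)%E =
  [forall k, ratio_ok q w `|w k| ==> (a < `|w k|)].
Proof.
apply/idP/forallP => [a_lt k|all_gt].
  apply/implyP => ok; rewrite -lte_fin.
  by apply: lt_le_trans a_lt _; exact: kthreshold_le.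
case: (kthresholdP w) => [->|[k ok ->]]; first exact: ltry.
by rewrite lte_fin; exact: (implyP (all_gt k) ok).
Qed.

Lemma kthreshold_leE w (a : R) : (kthreshold q w <= a%:E)%E =
  [exists k, ratio_ok q w `|w k| && (`|w k| <= a)].
Proof.
rewrite leNgt kthreshold_gtE negb_forall.
by under eq_existsb do rewrite negb_imply -leNgt.
Qed.

Lemma null_selected_le {H0 : {set 'I_m}} {w t0 t} {c : R} :
  (forall j, t0 <= w j < t -> w j <= - t0) ->
  (forall j, w j <= - t -> w j <= - t0) -> 0 <= t0 -> 1 <= c ->
  (#|[set j in H0 | t <= w j]|)%:R <= c * (#|[set j in H0 | w j <= - t]|)%:R ->
  (#|[set j | t0 <= w j] :&: H0|)%:R <= c * (count_neg w t0)%:R.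
Proof.
move=> low_neg neg_neg t0_ge0 c_ge1.
set Pt := [set j in H0 | t <= w j]; set Nt := [set j in H0 | w j <= - t].
set Zs := [set j in H0 | t0 <= w j < t].
have sel_le : (#|[set j | (t0 <= w j)%R] :&: H0| <= #|Pt| + #|Zs|)%N.
  apply: leq_trans (leq_card_setU Pt Zs); apply: subset_leq_card.
  apply/fintype.subsetP => j; rewrite !inE => /andP[-> ->] /=.
  by case: leP.
have neg_ge : (#|Nt| + #|Zs| <= count_neg w t0)%N.
  rewrite -cardsUI (_ : Nt :&: Zs = finset.set0) ?cards0 ?addn0; last first.
    apply/setP => j; rewrite !inE; apply/negP => /andP[/andP[_ ?] /andP[_ /andP[? ?]]].
    lra.
  apply: subset_leq_card; apply/fintype.subsetP => j.
  by rewrite !inE => /orP[/andP[_ /neg_neg]|/andP[_ /low_neg]].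
move: sel_le neg_ge; rewrite -!(ler_nat R) !natrD => sel_le neg_ge ratio.
have Zs_ge0 : 0 <= (#|Zs|)%:R :> R by [].
nra.
Qed.

Lemma FDP_ge0 (H0 : {set 'I_m}) w : 0 <= FDP q H0 w.
Proof. by rewrite /FDP divr_ge0. Qed.

Lemma FDP_le1 (H0 : {set 'I_m}) w : FDP q H0 w <= 1.
Proof.
rewrite /FDP ler_pdivrMr ?ltr0n ?leq_max ?orbT // mul1r ler_nat.
exact: leq_trans (subset_leq_card (subsetIl _ _)) (leq_maxl _ _).
Qed.

Lemma FDP_le_of_null_count {H0 : {set 'I_m}} {w t0} {c : R} :
  kthreshold q w = t0%:E -> ratio_ok q w t0 -> 0 <= c ->
  (#|[set j | t0 <= w j] :&: H0|)%:R <= c * (count_neg w t0)%:R ->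
  FDP q H0 w <= c * q.
Proof.
move=> T_eq ok c_ge0 nulls_le; rewrite /FDP.
have -> : kselected q w = [set j | t0 <= w j].
  by apply/setP => j; rewrite !inE T_eq lee_fin.
have M_gt0 : 0 < (maxn (count_pos w t0) 1)%:R :> R by rewrite ltr0n leq_max orbT.
move: ok; rewrite /ratio_ok !ler_pdivrMr // => ok.
by apply: le_trans nulls_le _; rewrite -mulrA ler_wpM2l.
Qed.

Lemma FDP_le_of_approx {H0 : {set 'I_m}} {w} {alpha eps : R} {Ep En : R -> R} :
  0 <= q <= 1 -> 0 < eps <= 1/2 -> 0 < alpha ->
  (forall t, 0 <= Ep t) -> (forall t, 0 <= En t) ->
  (forall t, 0 < t < alpha -> `|Ep t / En t - 1| <= eps) ->
  (forall t, 0 < t < alpha -> Num.max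
     `|(#|[set j in H0 | t <= w j]|)%:R / Ep t - 1|
     `|(#|[set j in H0 | w j <= - t]|)%:R / En t - 1| <= eps) ->
  (kthreshold q w <= alpha%:E)%E ->
  FDP q H0 w <= q + 8 * eps.
Proof.
move=> /andP[q_ge0 q_le1] /andP[eps_gt0 eps_le] alpha_gt0 Ep_ge0 En_ge0 sym approx.
case: (kthresholdP w) => [->|[k ok T_eq]]; first by rewrite leNgt ltey.
rewrite T_eq lee_fin => k_le.
have [t [t_in low_neg neg_neg]] :
    exists t, [/\ 0 < t < alpha, forall j, `|w k| <= w j < t -> w j <= - `|w k| &
                forall j, w j <= - t -> w j <= - `|w k|].
  by apply: exists_interior_threshold => //; rewrite normr_ge0.
have := approx t t_in; rewrite ge_max => /andP[pos_near neg_near].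
have counts_le := le_of_ratios_near1 (Ep_ge0 t) (En_ge0 t) eps_le pos_near neg_near (sym t t_in).
have c_ge1 : 1 <= 1 + 8 * eps by lra.
have nulls_le := null_selected_le low_neg neg_neg (normr_ge0 _) c_ge1 counts_le.
apply: le_trans (FDP_le_of_null_count T_eq ok (le_trans ler01 c_ge1) nulls_le) _.
by rewrite mulrDl mul1r lerD2l ler_piMr //; lra.
Qed.

End Deterministic.

Local Open Scope classical_set_scope.

Lemma measurable_preimage_of_tests {d} {T : measurableType d} {I : finType}
    {b : I -> T -> bool} {X : Type} (G : {ffun I -> bool} -> X) (Y : set X) :
  (forall i, measurable [set w | b i w]) ->
  measurable [set w | Y (G [ffun i => b i w])].
Proof.
move=> mb.
have -> : [set w | Y (G [ffun i => b i w])] =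
    \bigcup_(v in [set v | Y (G v)]) \bigcap_(i in [set: I]) [set w | b i w = v i].
  rewrite predeqE => w; split=> [Yw|[v Yv bv]].
    by exists [ffun i => b i w] => // i _; rewrite ffunE.
  by rewrite /= (_ : [ffun i => b i w] = v) //; apply/ffunP => i; rewrite ffunE bv.
apply: fin_bigcup_measurable; first exact: finite_finset.
move=> v _; apply: fin_bigcap_measurable; first exact: finite_finset.
move=> i _; case: (v i); first exact: mb.
rewrite (_ : [set w | b i w = false] = ~` [set w | b i w]); first exact: measurableC.
by rewrite predeqE => w /=; split => [->|/negP/negbTE].
Qed.

Section MeasurableKnockoff.
Variables (d : measure_display) (T : measurableType d) (R : realType) (m : nat).
Variables (q alpha : R) (W : 'I_m -> T -> R).
Hypothesis mW : forall j, measurable_fun setT (W j).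

(* The FDP and the event {T_q > alpha} depend on the sample only through
   these finitely many comparisons, which makes them measurable. *)
Definition knockoff_test_index := ((('I_m * 'I_m) + ('I_m * 'I_m)) + 'I_m)%type.

Definition knockoff_test (i : knockoff_test_index) (w : T) : bool :=
  match i with
  | inl (inl (j, k)) => W j w <= - `|W k w|
  | inl (inr (j, k)) => `|W k w| <= W j w
  | inr k => alpha < `|W k w|
  end.

Lemma measurable_knockoff_test i : measurable [set w | knockoff_test i w].
Proof.
have mabs k : measurable_fun setT (fun w => `|W k w|).
  exact: measurableT_comp (@normr_measurable R setT) (mW k).
rewrite -[X in measurable X]setTI.
case: i => [[[j k]|[j k]]|k] /=.
- exact: measurable_fun_le (mW j) (measurable_funN (mabs k)).
- exact: measurable_fun_le (mabs k) (mW j).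
- rewrite (_ : _ `&` _ = ~` (setT `&` [set w | `|W k w| <= alpha])).
    exact/measurableC/measurable_fun_le/measurable_cst.
  by rewrite !setTI predeqE => w /=; rewrite ltNge; split => /negP.
Qed.

Definition ratio_ok_of_tests (v : {ffun knockoff_test_index -> bool}) (k : 'I_m) :=
  (#|[set j | v (inl (inl (j, k)))]%SET|)%:R
    / (maxn #|[set j | v (inl (inr (j, k)))]%SET| 1)%:R <= q.

Definition kselected_of_tests (v : {ffun knockoff_test_index -> bool}) : {set 'I_m} :=
  [set j | [exists k, ratio_ok_of_tests v k && v (inl (inr (j, k)))]]%SET.

Local Notation tests w := [ffun i => knockoff_test i w].

Lemma ratio_ok_of_testsE w k :
  ratio_ok_of_tests (tests w) k = ratio_ok q (fun j => W j w) `|W k w|.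
Proof.
rewrite /ratio_ok_of_tests /ratio_ok /count_neg /count_pos.
by congr ((_%:R / (maxn _ 1)%:R) <= q); apply: eq_card => j; rewrite !inE ffunE.
Qed.

Lemma kselected_of_testsE w : kselected_of_tests (tests w) = kselected q (fun j => W j w).
Proof.
apply/setP => j; rewrite !inE kthreshold_leE.
by apply: eq_existsb => k; rewrite ratio_ok_of_testsE ffunE.
Qed.

Lemma measurable_FDP (H0 : {set 'I_m}) :
  measurable_fun setT (fun w => FDP q H0 (fun j => W j w)).
Proof.
move=> _ Y _; rewrite setTI.
pose F v : R := (#|kselected_of_tests v :&: H0|)%:R / (maxn #|kselected_of_tests v| 1)%:R.
have -> : (fun w => FDP q H0 (fun j => W j w)) @^-1` Y = [set w | Y (F (tests w))].
  by rewrite predeqE => w /=; rewrite /F kselected_of_testsE.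
exact: measurable_preimage_of_tests F Y measurable_knockoff_test.
Qed.

Lemma measurable_kthreshold_gt :
  measurable [set w | (alpha%:E < kthreshold q (fun j => W j w))%E].
Proof.
pose F v := [forall k, ratio_ok_of_tests v k ==> v (inr k)].
have -> : [set w | (alpha%:E < kthreshold q (fun j => W j w))%E] = [set w | F (tests w)].
  rewrite predeqE => w /=; rewrite kthreshold_gtE.
  by split=> /forallP ok; apply/forallP => k; move: (ok k); rewrite ratio_ok_of_testsE ffunE.
exact: measurable_preimage_of_tests F (fun b : bool => b) measurable_knockoff_test.
Qed.

End MeasurableKnockoff.

Lemma limn_esup_le_near (R : realType) (u : (\bar R)^nat) (x : \bar R) :
  (\forall n \near \oo, u n <= x)%E -> (limn_esup u <= x)%E.
Proof.
move=> [N _ uN]; rewrite /limn_esup limf_esupE.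
apply: (@le_trans _ _ (ereal_sup (u @` [set n | N <= n]%N))).
  by apply: ereal_inf_lbound; exists [set n | N <= n]%N => //; exists N.
by apply: ge_ereal_sup => _ [n Nn <-]; exact: uN.
Qed.

Lemma probability_setCU_le {d} {T : measurableType d} {R : realType}
    (P : probability T R) {E B : set T} {a b : R} :
  measurable E -> measurable B -> ((1 - a)%:E <= P E)%E -> (P B <= b%:E)%E ->
  (P (~` E `|` B) <= (a + b)%:E)%E.
Proof.
move=> mE mB PE PB.
apply: le_trans (measureU2 _ (measurableC mE) mB) _.
have -> : (P (~` E) + P B = 1 - P E + P B)%E by rewrite probability_setC.
rewrite EFinD leeD //.
move: PE (probability_le1 P mE) (measure_ge0 P E).
by case: (P E) => [r||] //=; rewrite ?lee_fin => ? ? ?; lra.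
Qed.

Lemma integral_le_off_event {d} {T : measurableType d} {R : realType}
    (P : probability T R) {f : T -> R} {C : set T} {b : R} :
  measurable_fun setT f -> measurable C -> 0 <= b ->
  (forall w, 0 <= f w <= 1) -> (forall w, ~ C w -> f w <= b) ->
  (\int[P]_w (f w)%:E <= b%:E + P C)%E.
Proof.
move=> mf mC b_ge0 f01 f_off.
have f_le w : ((f w)%:E <= (b + \1_C w)%:E)%E.
  rewrite lee_fin indicE; have /andP[f_ge0 f_le1] := f01 w.
  have [Cw|nCw] := pselect (C w).
    by rewrite mem_set //=; lra.
  by rewrite memNset //= addr0; exact: f_off.
apply: le_trans (ge0_le_integral P measurableT _ _ _ (fun w _ => f_le w)) _.
- by move=> w _; rewrite lee_fin; have /andP[] := f01 w.
- exact/measurable_EFinP.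
- exact/measurable_EFinP/measurable_funD/measurable_indic.
under eq_integral do rewrite EFinD.
rewrite ge0_integralD //; last exact/measurable_EFinP/measurable_indic.
have PT : P [set: T] = 1%E by exact: probability_setT.
by rewrite integral_cst // [X in (_ * X)%E]PT mule1 integral_indic // setIT.
Qed.

Theorem theorem1 (R : realType) (q : R) (hq : 0 < q < 1)
  (d : nat -> measure_display) (T : forall n, measurableType (d n))
  (P : forall n, probability (T n) R)
  (p : nat -> nat)
  (W : forall n, 'I_(p n) -> T n -> R)
  (mW : forall n j, measurable_fun setT (W n j))
  (H0 : forall n, {set 'I_(p n)})
  (alpha : nat -> R) (halpha : forall n, 0 < alpha n)
  (* (1) asymptotic approximate symmetry *)
  (h1 : forall eps : R, 0 < eps -> \forall n \near \oo,
      forall t : R, 0 < t < alpha n ->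
      `| (\sum_(j in H0 n) prob (P n) [set w | t <= W n j w])
         / (\sum_(j in H0 n) prob (P n) [set w | W n j w <= - t]) - 1 | <= eps)
  (* (2) approximation for indicator functions, o_P(1) *)
  (h2 : forall eps delta : R, 0 < eps -> 0 < delta -> \forall n \near \oo,
      exists E : set (T n), [/\ measurable E, (P n E >= (1 - delta)%:E)%E &
        forall w, E w -> forall t : R, 0 < t < alpha n ->
        Num.max
          `| (#|[set j in H0 n | t <= W n j w]|)%:R
             / (\sum_(j in H0 n) prob (P n) [set w' | t <= W n j w']) - 1 |
          `| (#|[set j in H0 n | W n j w <= - t]|)%:R
             / (\sum_(j in H0 n) prob (P n) [set w' | W n j w' <= - t]) - 1 |
        <= eps])
  (* (3) localization of T_q *)
  (h3 : forall eps : R, 0 < eps -> \forall n \near \oo,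
      (P n [set w | ((alpha n)%:E < kthreshold q (fun j => W n j w))%E] <= eps%:E)%E) :
  (limn_esup (fun n => \int[P n]_w (FDP q (H0 n) (fun j => W n j w))%:E)
     <= q%:E)%E.
Proof.
have [q_gt0 q_lt1] := andP hq.
apply/lee_addgt0Pr => eta eta_gt0; apply: limn_esup_le_near.
pose eps := Num.min (eta / 10) (1 / 2).
have eta10_gt0 : 0 < eta / 10 by lra.
have eps_gt0 : 0 < eps by rewrite /eps lt_min; apply/andP; split; lra.
have eps_le : eps <= 1 / 2 by rewrite /eps ge_min lexx orbT.
have eps_le_eta : eps <= eta / 10 by rewrite /eps ge_min lexx.
move: (h1 eps eps_gt0) (h2 eps _ eps_gt0 eta10_gt0) (h3 _ eta10_gt0).
apply: filterS3 => n sym [E [mE PE approx]] loc.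
set B := [set w | ((alpha n)%:E < kthreshold q (fun j => W n j w))%E] in loc.
have mB : measurable B by exact: measurable_kthreshold_gt.
have FDP_le_off w : ~ (~` E `|` B) w -> FDP q (H0 n) (fun j => W n j w) <= q + 8 * eps.
  move=> /not_orP[/contrapT Ew /negP]; rewrite -leNgt => T_le.
  apply: FDP_le_of_approx _ _ _ _ _ sym (approx w Ew) T_le.
  - by rewrite !ltW.
  - by rewrite eps_gt0.
  - exact: halpha.
  - by move=> t; apply: sumr_ge0 => j _; apply: fine_ge0.
  - by move=> t; apply: sumr_ge0 => j _; apply: fine_ge0.
apply: le_trans (integral_le_off_event (P n) _ _ _ _ FDP_le_off) _.
- exact: measurable_FDP.
- by apply: measurableU => //; exact: measurableC.
- lra.
- by move=> w; rewrite FDP_ge0 FDP_le1.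
apply: le_trans (leeD (lexx _) (probability_setCU_le (P n) mE mB PE loc)) _.
by rewrite -EFinD lee_fin; lra.
Qed.
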